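(* In the common-ownership game below, suppose $\kappa_{ij}=\kappa$ for all $i\ne j$, where $\kappa\ge0$ and $2+\alpha(1-\kappa)>0$. Then every equilibrium $(\mathbf A^{\rm d},\mathbf q^{\rm d})$ with $\operatorname{rank}(\mathbf A^{\rm d})\ge2$ satisfies $$\mathbf A^{\rm d}\mathbf q^{\rm d}=\frac{\boldsymbol\beta}{1+\kappa},\qquad \mathbf q^{\rm d}=\frac{\boldsymbol\gamma}{2+\alpha(1-\kappa)},\qquad \bar s_{\boldsymbol\gamma}(\mathbf A^{\rm d})=\frac{\Big(\frac{2+\alpha(1-\kappa)}{1+\kappa}\Big)^2-\|\boldsymbol\gamma\|_2^2}{n(n-1)}.$$ Moreover, an equilibrium satisfying the first two equalities exists if and only if $r(\boldsymbol\gamma)\le\frac{2+\alpha(1-\kappa)}{1+\kappa}\le R(\boldsymbol\gamma)$.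
   Context: Model: integers $n\ge2$, $m\ge2$; $\alpha>0$, $\boldsymbol\beta\in\mathbb R^m$ with $\|\boldsymbol\beta\|_2=1$, $\boldsymbol\gamma\in\mathbb R^n$ with all $\gamma_i>0$. Firm $i$ chooses a unit vector $\mathbf a_i\in\mathbb R^m$ and $q_i\ge0$; $\mathbf A=[\mathbf a_1,\dots,\mathbf a_n]$. Standalone profit: $\Pi_i=\alpha q_i\mathbf a_i^\top(\boldsymbol\beta-\sum_{j\ne i}q_j\mathbf a_j)-(1+\alpha)q_i^2+\gamma_iq_i$. With ownership weights $\kappa_{ij}$ ($\kappa_{ii}=1$), firm $i$ maximizes $\tilde\Pi_i=\Pi_i+\sum_{j\ne i}\kappa_{ij}\Pi_j$; an equilibrium is a profile of mutual best responses. $\bar s_{\boldsymbol\gamma}(\mathbf A)=\binom n2^{-1}\sum_{1\le i<j\le n}\gamma_i\gamma_j\mathbf a_i^\top\mathbf a_j$. $R(\mathbf v)=\|\mathbf v\|_1$, $r(\mathbf v)=2\|\mathbf v\|_\infty-\|\mathbf v\|_1$. *)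

From HB Require Import structures.
From mathcomp Require Import all_boot all_order all_algebra.
From mathcomp Require Import reals.
Set Implicit Arguments. Unset Strict Implicit. Unset Printing Implicit Defensive.
Import Order.TTheory GRing.Theory Num.Theory.
Local Open Scope ring_scope.

Section Game.
Variables (R : realType) (m n : nat).

Definition dotc (u v : 'cV[R]_m) : R := \sum_(k < m) u k 0 * v k 0.

Definition unitvec (v : 'cV[R]_m) : Prop := \sum_(k < m) v k 0 ^+ 2 = 1.

Definition sqnorm2 (v : 'cV[R]_n) : R := \sum_(i < n) v i 0 ^+ 2.

Definition Rl1 (v : 'cV[R]_n) : R := \sum_(i < n) `|v i 0|.
Definition linf (v : 'cV[R]_n) : R := \big[Num.max/0]_(i < n) `|v i 0|.
Definition rsmall (v : 'cV[R]_n) : R := 2 * linf v - Rl1 v.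

Definition profit (alpha : R) (beta : 'cV[R]_m) (gamma : 'cV[R]_n)
  (A : 'M[R]_(m, n)) (q : 'cV[R]_n) (i : 'I_n) : R :=
  alpha * q i 0 * dotc (col i A) (beta - \sum_(j < n | j != i) q j 0 *: col j A)
  - (1 + alpha) * q i 0 ^+ 2 + gamma i 0 * q i 0.

Definition objective (K : 'I_n -> 'I_n -> R) (alpha : R) (beta : 'cV[R]_m)
  (gamma : 'cV[R]_n) (A : 'M[R]_(m, n)) (q : 'cV[R]_n) (i : 'I_n) : R :=
  profit alpha beta gamma A q i
  + \sum_(j < n | j != i) K i j * profit alpha beta gamma A q j.

Definition devA (A : 'M[R]_(m, n)) (i : 'I_n) (a : 'cV[R]_m) : 'M[R]_(m, n) :=
  \matrix_(k < m, j < n) (if j == i then a k 0 else A k j).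
Definition devq (q : 'cV[R]_n) (i : 'I_n) (x : R) : 'cV[R]_n :=
  \col_(j < n) (if j == i then x else q j 0).

Definition feasible (A : 'M[R]_(m, n)) (q : 'cV[R]_n) : Prop :=
  (forall i : 'I_n, unitvec (col i A)) /\ (forall i : 'I_n, 0 <= q i 0).

Definition equilibrium (K : 'I_n -> 'I_n -> R) (alpha : R) (beta : 'cV[R]_m)
  (gamma : 'cV[R]_n) (A : 'M[R]_(m, n)) (q : 'cV[R]_n) : Prop :=
  feasible A q /\
  forall (i : 'I_n) (a : 'cV[R]_m) (x : R), unitvec a -> 0 <= x ->
    objective K alpha beta gamma (devA A i a) (devq q i x) i
    <= objective K alpha beta gamma A q i.

Definition sbar (gamma : 'cV[R]_n) (A : 'M[R]_(m, n)) : R :=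
  ('C(n, 2)%:R)^-1 *
  \sum_(i < n) \sum_(j < n | (i < j)%N) gamma i 0 * gamma j 0 * dotc (col i A) (col j A).

End Game.

(* With equal cross-ownership weights, firm i's objective depends on its own
   action (a_i, q_i) only through
     alpha q_i <a_i, v_i> - (1 + alpha) q_i^2 + gamma_i q_i,
   where v_i = beta - (1 + kappa) sum_(j <> i) q_j a_j is its residual demand.
   A best response therefore points a_i along v_i and obeys a linear
   first-order condition in q_i, so beta - (1 + kappa) A q is parallel to every
   column of A; when rank A >= 2 it vanishes, which pins down A q and then q.
   The value of sbar comes from expanding |A gamma|^2.  Conversely, the
   aggregate conditions say that the unit vectors a_i satisfy
   sum_i gamma_i a_i = L beta with L = (2 + alpha (1 - kappa)) / (1 + kappa):
   such vectors exist iff sides gamma_1, ..., gamma_n, L close a polygon, i.e.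
   r(gamma) <= L <= R(gamma), and they can be found in a plane through beta. *)

From HB Require Import structures.
From mathcomp Require Import all_boot all_order all_algebra.
From mathcomp Require Import reals ring lra zify.
Set Implicit Arguments. Unset Strict Implicit. Unset Printing Implicit Defensive.
Import Order.TTheory GRing.Theory Num.Theory.
Local Open Scope ring_scope.

Section InnerProduct.
Variables (R : realType) (m : nat).
Implicit Types (u v w : 'cV[R]_m) (c : R).

Lemma dotcC u v : dotc u v = dotc v u.
Proof. by apply: eq_bigr => k _; rewrite mulrC. Qed.

Lemma dotcDr u v w : dotc u (v + w) = dotc u v + dotc u w.
Proof. by rewrite /dotc -big_split; apply: eq_bigr => k _; rewrite mxE mulrDr. Qed.

Lemma dotcZr u v c : dotc u (c *: v) = c * dotc u v.
Proof. by rewrite /dotc mulr_sumr; apply: eq_bigr => k _; rewrite mxE mulrCA. Qed.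

Lemma dotcNr u v : dotc u (- v) = - dotc u v.
Proof. by rewrite -scaleN1r dotcZr mulN1r. Qed.

Lemma dotcBr u v w : dotc u (v - w) = dotc u v - dotc u w.
Proof. by rewrite dotcDr dotcNr. Qed.

Lemma dotc0r u : dotc u 0 = 0.
Proof. by rewrite -(scale0r 0) dotcZr mul0r. Qed.

Lemma dotc_sumr u (I : Type) (r : seq I) (P : pred I) (F : I -> 'cV[R]_m) :
  dotc u (\sum_(j <- r | P j) F j) = \sum_(j <- r | P j) dotc u (F j).
Proof. by apply: big_morph; [exact: dotcDr | exact: dotc0r]. Qed.

Lemma dotcDl u v w : dotc (v + w) u = dotc v u + dotc w u.
Proof. by rewrite !(dotcC _ u) dotcDr. Qed.

Lemma dotcZl u v c : dotc (c *: v) u = c * dotc v u.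
Proof. by rewrite !(dotcC _ u) dotcZr. Qed.

Lemma dotcNl u v : dotc (- v) u = - dotc v u.
Proof. by rewrite !(dotcC _ u) dotcNr. Qed.

Lemma dotc_suml u (I : Type) (r : seq I) (P : pred I) (F : I -> 'cV[R]_m) :
  dotc (\sum_(j <- r | P j) F j) u = \sum_(j <- r | P j) dotc (F j) u.
Proof. by rewrite dotcC dotc_sumr; apply: eq_bigr => j _; rewrite dotcC. Qed.

Lemma dotcc_ge0 u : 0 <= dotc u u.
Proof. by apply: sumr_ge0 => k _; rewrite -expr2 sqr_ge0. Qed.

Lemma dotcc_eq0 u : dotc u u = 0 -> u = 0.
Proof.
move/eqP; rewrite psumr_eq0 => [/allP u0|k _]; last by rewrite -expr2 sqr_ge0.
apply/matrixP => k l; rewrite (ord1 l) mxE.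
by have /implyP/(_ isT) := u0 k (mem_index_enum k); rewrite mulf_eq0 orbb => /eqP.
Qed.

Lemma dotcc_gt0 u : u != 0 -> 0 < dotc u u.
Proof.
by move=> u0; rewrite lt_def dotcc_ge0 andbT; apply: contraNN u0 => /eqP/dotcc_eq0->.
Qed.

Lemma unitvecE u : unitvec u <-> dotc u u = 1.
Proof.
by rewrite /unitvec /dotc (eq_bigr (fun k => u k 0 * u k 0)) // => k _; rewrite expr2.
Qed.

Lemma unitvecN u : unitvec u -> unitvec (- u).
Proof. by rewrite !unitvecE dotcNl dotcNr opprK. Qed.

Lemma unitvec_neq0 u : unitvec u -> u != 0.
Proof.
move/unitvecE => uu; apply/eqP => u0; move: uu.
by rewrite u0 dotc0r => /eqP; rewrite eq_sym oner_eq0.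
Qed.

Lemma unitvec_normalize v : v != 0 -> unitvec ((Num.sqrt (dotc v v))^-1 *: v).
Proof.
move=> /dotcc_gt0 vpos; apply/unitvecE; rewrite dotcZl dotcZr -{3}(sqr_sqrtr (ltW vpos)).
by field; rewrite sqrtr_eq0 -ltNge.
Qed.

Lemma dotc_unit_bound u v : unitvec u -> unitvec v -> -1 <= dotc u v <= 1.
Proof.
move=> /unitvecE uu /unitvecE vv.
have := dotcc_ge0 (u - v); have := dotcc_ge0 (u + v).
rewrite !(dotcDl, dotcDr, dotcNl, dotcNr) uu vv (dotcC v u) => h1 h2.
by apply/andP; split; lra.
Qed.

Lemma norm_dotc_unit_le1 u v : unitvec u -> unitvec v -> `|dotc u v| <= 1.
Proof. by move=> uu uv; rewrite ler_norml; exact: dotc_unit_bound. Qed.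

Lemma dotc_delta u i c : dotc u (c *: delta_mx i 0) = c * u i 0.
Proof.
rewrite dotcZr /dotc (bigD1 i) //= mxE !eqxx mulr1 big1 ?addr0 // => k /negbTE ki.
by rewrite mxE ki mulr0.
Qed.

End InnerProduct.

Section BestResponse.
Variables (R : realType) (m : nat).

Definition own_payoff (alpha g : R) (v a : 'cV[R]_m) (x : R) : R :=
  alpha * x * dotc a v - (1 + alpha) * x ^+ 2 + g * x.

Lemma quadratic_argmax (b c x0 : R) : 0 < c -> 0 <= b -> 0 <= x0 ->
  (forall x, 0 <= x -> b * x - c * x ^+ 2 <= b * x0 - c * x0 ^+ 2) ->
  2 * c * x0 = b.
Proof.
move=> c0 b0 x00 hmax; set x := b / (2 * c).
have bx : b = 2 * c * x by rewrite /x; field; lra.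
have := hmax x (divr_ge0 b0 (mulr_ge0 (ler0n _ 2) (ltW c0))).
have -> : b * x0 - c * x0 ^+ 2 = b * x - c * x ^+ 2 - c * (x - x0) ^+ 2.
  by rewrite bx; ring.
move=> h; have : c * (x - x0) ^+ 2 <= 0 by lra.
rewrite pmulr_rle0 // => h0; have : (x - x0) ^+ 2 == 0 by rewrite eq_le h0 sqr_ge0.
by rewrite sqrf_eq0 subr_eq0 bx => /eqP->.
Qed.

Lemma unit_argmax_dotc (a v : 'cV[R]_m) : unitvec a ->
  (forall b, unitvec b -> dotc b v <= dotc a v) -> v = dotc a v *: a.
Proof.
move=> ua hmax; have [->|v0] := eqVneq v 0; first by rewrite dotc0r scale0r.
set p := dotc a v.
set s := Num.sqrt (dotc v v).
have ss : s ^+ 2 = dotc v v by rewrite sqr_sqrtr // dotcc_ge0.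
have s0 : 0 < s by rewrite sqrtr_gt0 dotcc_gt0.
have sp : s <= p.
  have := hmax _ (unitvec_normalize v0); rewrite dotcZl -/s -ss.
  by rewrite expr2 mulrA mulVf ?mul1r // gt_eqF.
apply/eqP; rewrite -subr_eq0; apply/eqP/dotcc_eq0/eqP.
rewrite eq_le dotcc_ge0 andbT !(dotcDl, dotcDr, dotcNl, dotcNr, dotcZl, dotcZr).
rewrite (dotcC v a) -/p (unitvecE a).1 // -ss; nra.
Qed.

Lemma own_payoff_argmax (alpha g qi : R) (v ai : 'cV[R]_m) :
  0 < alpha -> 0 < g -> unitvec ai -> 0 <= qi ->
  (forall a x, unitvec a -> 0 <= x ->
     own_payoff alpha g v a x <= own_payoff alpha g v ai qi) ->
  v = dotc ai v *: ai /\ 2 * (1 + alpha) * qi = alpha * dotc ai v + g.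
Proof.
rewrite /own_payoff => a0 g0 uai qi0 hmax; set p := dotc ai v.
have qi_gt0 : 0 < qi.
  rewrite lt_def qi0 andbT; apply/eqP => qi_eq0.
  have [a [ua va]] : exists a, unitvec a /\ 0 <= dotc a v.
    have [p0|p0] := lerP 0 p; first by exists ai.
    by exists (- ai); rewrite dotcNl oppr_ge0 ltW //; split => //; exact: unitvecN.
  have x0 : 0 < g / (2 * (1 + alpha)) by rewrite divr_gt0 //; lra.
  have := hmax a _ ua (ltW x0); rewrite qi_eq0.
  have -> : (1 + alpha) * (g / (2 * (1 + alpha))) ^+ 2 = g / (2 * (1 + alpha)) * (g / 2).
    by field; lra.
  have := mulr_ge0 (mulr_ge0 (ltW a0) (ltW x0)) va; have := mulr_gt0 g0 x0; lra.
have pmax b : unitvec b -> dotc b v <= p.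
  move=> ub; have := hmax b qi ub qi0.
  by rewrite lerD2r lerD2r ler_pM2l ?mulr_gt0.
have p0 : 0 <= p by have := pmax _ (unitvecN uai); rewrite dotcNl -/p; lra.
split; first exact: unit_argmax_dotc.
apply: quadratic_argmax => [||//|x x0].
- lra.
- by rewrite addr_ge0 ?mulr_ge0 ?(ltW a0) ?(ltW g0).
- by have := hmax ai x uai x0; rewrite -/p; lra.
Qed.

End BestResponse.

Section Deviations.
Variables (R : realType) (m n : nat).
Implicit Types (A : 'M[R]_(m, n)) (q gamma : 'cV[R]_n) (beta : 'cV[R]_m).

Definition rivals A q (i : 'I_n) : 'cV[R]_m := \sum_(j < n | j != i) q j 0 *: col j A.

Definition residual_demand (kappa : R) beta A q (i : 'I_n) : 'cV[R]_m :=
  beta - (1 + kappa) *: rivals A q i.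

Lemma mulmx_sum_col A q : A *m q = \sum_(j < n) q j 0 *: col j A.
Proof.
apply/matrixP => k l; rewrite (ord1 l) !mxE summxE.
by apply: eq_bigr => j _; rewrite !mxE mulrC.
Qed.

Lemma dotc_mulmxr (u : 'cV[R]_m) A q :
  dotc u (A *m q) = \sum_j q j 0 * dotc u (col j A).
Proof. by rewrite mulmx_sum_col dotc_sumr; apply: eq_bigr => j _; rewrite dotcZr. Qed.

Lemma mulmx_rivals A q i : A *m q = q i 0 *: col i A + rivals A q i.
Proof. by rewrite mulmx_sum_col (bigD1 i). Qed.

Lemma col_devA A i a j : col j (devA A i a) = if j == i then a else col j A.
Proof. by apply/matrixP => k l; rewrite (ord1 l) !mxE; case: (j == i); rewrite ?mxE. Qed.

Lemma devqE q i x j : devq q i x j 0 = if j == i then x else q j 0.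
Proof. by rewrite mxE. Qed.

Lemma devA_col A i : devA A i (col i A) = A.
Proof. by apply/matrixP => k j; rewrite !mxE; case: eqP => // ->. Qed.

Lemma devq_id q i : devq q i (q i 0) = q.
Proof. by apply/matrixP => k l; rewrite (ord1 l) !mxE; case: eqP => // ->. Qed.

(* Firm i's own action enters its rivals' profits only through the term
   -kappa alpha x <a, sum_j q_j a_j>, which merges with its own profit. *)
Lemma objective_devE (K : 'I_n -> 'I_n -> R) (alpha kappa : R) beta gamma A q i :
  (forall j, j != i -> K i j = kappa) ->
  exists C, forall a x, objective K alpha beta gamma (devA A i a) (devq q i x) i =
    own_payoff alpha (gamma i 0) (residual_demand kappa beta A q i) a x + C.
Proof.
move=> hK.
pose rest j := beta - \sum_(k < n | (k != j) && (k != i)) q k 0 *: col k A.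
exists (\sum_(j < n | j != i) kappa * (alpha * q j 0 * dotc (col j A) (rest j)
                                      - (1 + alpha) * q j 0 ^+ 2 + gamma j 0 * q j 0)).
move=> a x.
have rival_profit j : j != i ->
    K i j * profit alpha beta gamma (devA A i a) (devq q i x) j =
    kappa * (alpha * q j 0 * dotc (col j A) (rest j)
             - (1 + alpha) * q j 0 ^+ 2 + gamma j 0 * q j 0)
    - kappa * alpha * x * dotc a (q j 0 *: col j A).
  move=> ji; rewrite hK // /profit col_devA !devqE (negbTE ji) (bigD1 i) 1?eq_sym //=.
  rewrite col_devA devqE eqxx.
  under eq_bigr => k /andP[_ /negbTE ki] do rewrite col_devA devqE ki.
  rewrite opprD addrCA -/(rest j) dotcDr dotcNr !dotcZr (dotcC (col j A) a); ring.
rewrite /objective (eq_bigr _ rival_profit) sumrB.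
rewrite -[\sum_(j | j != i) kappa * alpha * x * _]mulr_sumr -dotc_sumr.
rewrite /profit /own_payoff /residual_demand /rivals col_devA devqE eqxx.
under eq_bigr => j /negbTE ji do rewrite col_devA devqE ji.
rewrite !dotcBr !dotcZr; ring.
Qed.

Lemma equilibriumP (K : 'I_n -> 'I_n -> R) (alpha kappa : R) beta gamma A q :
  (forall i j, i != j -> K i j = kappa) ->
  equilibrium K alpha beta gamma A q <->
  feasible A q /\ forall i a x, unitvec a -> 0 <= x ->
    own_payoff alpha (gamma i 0) (residual_demand kappa beta A q i) a x <=
    own_payoff alpha (gamma i 0) (residual_demand kappa beta A q i) (col i A) (q i 0).
Proof.
move=> hK; have hKi i j : j != i -> K i j = kappa by move=> ji; apply: hK; rewrite eq_sym.
have gainE i a x :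
    objective K alpha beta gamma (devA A i a) (devq q i x) i -
    objective K alpha beta gamma A q i =
    own_payoff alpha (gamma i 0) (residual_demand kappa beta A q i) a x -
    own_payoff alpha (gamma i 0) (residual_demand kappa beta A q i) (col i A) (q i 0).
  have [C hC] := objective_devE alpha beta gamma A q (hKi i).
  by rewrite -{2}(devA_col A i) -{2}(devq_id q i) !hC opprD addrACA subrr addr0.
split=> -[feas br]; split => // i a x ua x0.
- by rewrite -subr_le0 -gainE subr_le0; exact: br.
- by rewrite -subr_le0 gainE subr_le0; exact: br.
Qed.

End Deviations.

Lemma rank_le1_cols_collinear (F : fieldType) (m n : nat) (A : 'M[F]_(m, n))
    (w : 'cV[F]_m) (c : 'I_n -> F) :
  (forall j, col j A = c j *: w) -> (\rank A <= 1)%N.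
Proof.
move=> colA; have -> : A = w *m \row_j c j; last exact: mulmx_max_rank.
apply/matrixP => k j; have /matrixP/(_ k 0) := colA j.
by rewrite !mxE big_ord1 !mxE mulrC.
Qed.

Lemma natr_bin2 (R : numFieldType) (n : nat) :
  'C(n, 2)%:R = n%:R * (n%:R - 1) / 2 :> R.
Proof.
case: n => [|n]; first by rewrite bin0n !mul0r.
have := congr1 (fun k => k%:R : R) (bin_ffact n.+1 2).
by rewrite ffactSS ffactn1 /= !natrM -addn1 natrD addrK => <-; field.
Qed.

Lemma sum_sym_pairs (R : comPzRingType) (n : nat) (F : 'I_n -> 'I_n -> R) :
  (forall i j, F i j = F j i) ->
  \sum_(i < n) \sum_(j < n) F i j =
  \sum_(i < n) F i i + 2 * \sum_(i < n) \sum_(j < n | (i < j)%N) F i j.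
Proof.
move=> Fsym.
have splitE (i : 'I_n) : \sum_(j < n) F i j =
    F i i + \sum_(j < n | (i < j)%N) F i j + \sum_(j < n | (j < i)%N) F i j.
  rewrite (bigD1 i) //= (bigID (fun j : 'I_n => (i < j)%N)) /= addrA.
  congr (_ + _ + _); apply: eq_bigl => j.
    by rewrite andb_idl // => /ltn_eqF/negbT; rewrite eq_sym.
  by rewrite -leqNgt ltn_neqAle.
have lowerE : \sum_(i < n) \sum_(j < n | (j < i)%N) F i j =
               \sum_(i < n) \sum_(j < n | (i < j)%N) F i j.
  rewrite (exchange_big_dep xpredT) //=; apply: eq_bigr => i _; apply: eq_bigr => j _.
  exact: Fsym.
rewrite (eq_bigr _ (fun i _ => splitE i)) !big_split /= lowerE; ring.
Qed.

Section AverageSimilarity.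
Variables (R : realType) (m n : nat).

Lemma dotc_mulmx (A : 'M[R]_(m, n)) (g : 'cV[R]_n) :
  (forall i, unitvec (col i A)) ->
  dotc (A *m g) (A *m g) = sqnorm2 g +
    2 * \sum_(i < n) \sum_(j < n | (i < j)%N) g i 0 * g j 0 * dotc (col i A) (col j A).
Proof.
move=> unitA; rewrite mulmx_sum_col dotc_suml.
transitivity (\sum_(i < n) \sum_(j < n) g i 0 * g j 0 * dotc (col i A) (col j A)).
  apply: eq_bigr => i _; rewrite dotcZl dotc_sumr mulr_sumr.
  by apply: eq_bigr => j _; rewrite dotcZr mulrA.
rewrite sum_sym_pairs => [|i j]; last by rewrite [in LHS]dotcC; ring.
congr (_ + _); apply: eq_bigr => i _.
by rewrite (unitvecE _).1 // mulr1 expr2.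
Qed.

(* [x / 0 = 0] makes the identity hold also for [n < 2], where both sides vanish. *)
Lemma sbarE (A : 'M[R]_(m, n)) (g : 'cV[R]_n) :
  (forall i, unitvec (col i A)) ->
  sbar g A = (dotc (A *m g) (A *m g) - sqnorm2 g) / (n%:R * (n%:R - 1)).
Proof.
move=> unitA; rewrite dotc_mulmx // [sqnorm2 g + _]addrC addrK.
by rewrite /sbar natr_bin2 invf_div mulrAC.
Qed.

End AverageSimilarity.

Section UnitColumnSums.
Variables (R : realType) (m n : nat).
Variables (A : 'M[R]_(m, n)) (g : 'cV[R]_n) (beta : 'cV[R]_m) (L : R).
Hypotheses (unitA : forall i, unitvec (col i A)) (unit_beta : unitvec beta).
Hypothesis (Ag : A *m g = L *: beta).

Lemma norm_dotc_mulmx_le (u : 'cV[R]_m) : unitvec u -> `|dotc u (A *m g)| <= `|L|.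
Proof. by move=> uu; rewrite Ag dotcZr normrM ler_piMr ?norm_dotc_unit_le1. Qed.

Lemma norm_le_Rl1 : `|L| <= Rl1 g.
Proof.
have -> : L = dotc beta (A *m g) by rewrite Ag dotcZr (unitvecE _).1 ?mulr1.
rewrite dotc_mulmxr; apply: le_trans (ler_norm_sum _ _ _) _.
by apply: ler_sum => j _; rewrite normrM ler_piMr ?norm_dotc_unit_le1.
Qed.

(* Projecting onto [col k A] isolates [g k]: the other terms total at most
   [Rl1 g - |g k|]. *)
Lemma rsmall_le_norm : rsmall g <= `|L|.
Proof.
suff linf_le : linf g <= (`|L| + Rl1 g) / 2 by rewrite /rsmall; lra.
apply: bigmax_le => [|k _]; first by rewrite divr_ge0 ?addr_ge0 ?sumr_ge0.
have RE : Rl1 g = `|g k 0| + \sum_(j | j != k) `|g j 0| by rewrite /Rl1 (bigD1 k).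
have others : `|\sum_(j | j != k) g j 0 * dotc (col k A) (col j A)| <=
              \sum_(j | j != k) `|g j 0|.
  apply: le_trans (ler_norm_sum _ _ _) _.
  by apply: ler_sum => j _; rewrite normrM ler_piMr ?norm_dotc_unit_le1.
have gkE : g k 0 = dotc (col k A) (A *m g) -
                   \sum_(j | j != k) g j 0 * dotc (col k A) (col j A).
  by rewrite [in RHS]dotc_mulmxr (bigD1 k) //= (unitvecE _).1 ?mulr1 ?addrK.
have := ler_normB (dotc (col k A) (A *m g))
                  (\sum_(j | j != k) g j 0 * dotc (col k A) (col j A)).
have := norm_dotc_mulmx_le (unitA k); rewrite -gkE; lra.
Qed.

End UnitColumnSums.

Section PlanarPolygon.
Variable R : realType.

Lemma sqr_add_eq0 (x y : R) : x ^+ 2 + y ^+ 2 = 0 -> x = 0 /\ y = 0.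
Proof. by move/eqP; rewrite paddr_eq0 ?sqr_ge0 // !sqrf_eq0 => /andP[/eqP-> /eqP->]. Qed.

(* Law of cosines: [a] is [y / t] rotated by the angle whose cosine is [p / t]. *)
Lemma exists_unit_at_distance (y1 y2 t g l : R) :
  0 <= t -> t ^+ 2 = y1 ^+ 2 + y2 ^+ 2 -> 0 < g ->
  t - g <= l -> g - t <= l -> l <= t + g ->
  exists a1 a2, a1 ^+ 2 + a2 ^+ 2 = 1 /\ (y1 - g * a1) ^+ 2 + (y2 - g * a2) ^+ 2 = l ^+ 2.
Proof.
move=> t0 ty g0 l1 l2 l3.
have [t_eq0|t_neq0] := eqVneq t 0.
  have [-> ->] : y1 = 0 /\ y2 = 0 by apply: sqr_add_eq0; rewrite -ty t_eq0 expr0n.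
  have -> : l = g by move: l1 l2 l3; rewrite t_eq0; lra.
  by exists 1, 0; split; ring.
pose p := (t ^+ 2 + g ^+ 2 - l ^+ 2) / (2 * g).
have p_le_t : 0 <= t ^+ 2 - p ^+ 2.
  have -> : t ^+ 2 - p ^+ 2 =
      (l - t + g) * (l + t - g) * (t + g - l) * (t + g + l) / (4 * g ^+ 2).
    by rewrite /p; field; lra.
  by rewrite divr_ge0 ?mulr_ge0 ?sqr_ge0 //; lra.
set s := Num.sqrt (t ^+ 2 - p ^+ 2).
have ss : s ^+ 2 = t ^+ 2 - p ^+ 2 by rewrite sqr_sqrtr.
have t2 : t ^+ 2 != 0 by rewrite sqrf_eq0.
exists ((p * y1 - s * y2) / t ^+ 2), ((p * y2 + s * y1) / t ^+ 2); split.
  have -> : ((p * y1 - s * y2) / t ^+ 2) ^+ 2 + ((p * y2 + s * y1) / t ^+ 2) ^+ 2 =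
     (p ^+ 2 + s ^+ 2) * (y1 ^+ 2 + y2 ^+ 2) / (t ^+ 2) ^+ 2 by field.
  by rewrite ss -ty; field.
have -> : (y1 - g * ((p * y1 - s * y2) / t ^+ 2)) ^+ 2 +
          (y2 - g * ((p * y2 + s * y1) / t ^+ 2)) ^+ 2
   = (y1 ^+ 2 + y2 ^+ 2) - 2 * g * p * ((y1 ^+ 2 + y2 ^+ 2) / t ^+ 2)
     + g ^+ 2 * ((p ^+ 2 + s ^+ 2) * (y1 ^+ 2 + y2 ^+ 2) / (t ^+ 2) ^+ 2) by field.
by rewrite ss -ty /p; field; lra.
Qed.

(* Place the last side [g k] so that the remaining gap [l] still satisfies
   the polygon inequalities. *)
Lemma exists_planar_unit_sum (g : nat -> R) (k : nat) (y1 y2 t : R) :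
  (forall i, (i < k)%N -> 0 < g i) ->
  0 <= t -> t ^+ 2 = y1 ^+ 2 + y2 ^+ 2 -> t <= \sum_(i < k) g i ->
  (forall i, (i < k)%N -> 2 * g i <= \sum_(i < k) g i + t) ->
  exists c s : nat -> R, [/\ forall i, (i < k)%N -> c i ^+ 2 + s i ^+ 2 = 1,
     \sum_(i < k) g i * c i = y1 & \sum_(i < k) g i * s i = y2].
Proof.
elim: k y1 y2 t => [|k IH] y1 y2 t g_gt0 t0 ty t_le polygon.
  have t_eq0 : t = 0 by move: t_le; rewrite big_ord0; lra.
  have [-> ->] : y1 = 0 /\ y2 = 0 by apply: sqr_add_eq0; rewrite -ty t_eq0 expr0n.
  by exists (fun _ => 0), (fun _ => 0); split => //; rewrite big_ord0.
rewrite big_ord_recr /= in t_le polygon; set h := \sum_(i < k) g i in t_le polygon.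
have g_gt0' i : (i < k)%N -> 0 < g i by move=> ik; apply: g_gt0; exact: ltnW.
have gk0 : 0 < g k by exact: g_gt0.
have gi_le_h i : (i < k)%N -> g i <= h.
  move=> ik; rewrite /h (bigD1 (Ordinal ik)) //= lerDl.
  by apply: sumr_ge0 => j _; exact/ltW/g_gt0'.
have h0 : 0 <= h by apply: sumr_ge0 => j _; exact/ltW/g_gt0'.
have gk_le := polygon k (ltnSn k).
have [l [l_le_h l1 l2 l3 sides]] : exists l, [/\ l <= h, t - g k <= l, g k - t <= l,
    l <= t + g k & forall i, (i < k)%N -> 2 * g i <= h + l].
  have [h_le|h_gt] := lerP h (t + g k).
    by exists h; split => //; try lra; move=> i /gi_le_h; lra.
  by exists (t + g k); split => //; try lra; move=> i ik; have := polygon i (ltnW ik); lra.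
have [a1 [a2 [ua dist]]] := exists_unit_at_distance t0 ty gk0 l1 l2 l3.
have l0 : 0 <= l by lra.
have [c [s [cs hc hs]]] := IH _ _ _ g_gt0' l0 (esym dist) l_le_h sides.
exists (fun i => if i == k then a1 else c i), (fun i => if i == k then a2 else s i).
split.
- by move=> i ik; case: eqP => // i_neq_k; apply: cs; lia.
- rewrite big_ord_recr /= eqxx -[X in _ = X](subrK (g k * a1)) -hc.
  by congr (_ + _); apply: eq_bigr => i _; rewrite ltn_eqF.
- rewrite big_ord_recr /= eqxx -[X in _ = X](subrK (g k * a2)) -hs.
  by congr (_ + _); apply: eq_bigr => i _; rewrite ltn_eqF.
Qed.

End PlanarPolygon.

Lemma exists_unit_orthogonal (R : realType) (m : nat) (beta : 'cV[R]_m) :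
  (2 <= m)%N -> exists e, unitvec e /\ dotc beta e = 0.
Proof.
case: m beta => [|[|m]] beta // _.
pose i0 : 'I_m.+2 := ord0; pose i1 : 'I_m.+2 := lift ord0 ord0.
pose f : 'cV[R]_m.+2 := - beta i1 0 *: delta_mx i0 0 + beta i0 0 *: delta_mx i1 0.
have beta_f : dotc beta f = 0 by rewrite dotcDr !dotc_delta; ring.
have [f0|f_neq0] := eqVneq f 0.
  exists (1 *: delta_mx i0 0); split; last first.
    rewrite dotc_delta mul1r; have /matrixP/(_ i1 0) := f0.
    by rewrite !mxE /= !mulr0 mulr1 add0r.
  by apply/unitvecE; rewrite dotc_delta !mxE !eqxx /= !mulr1.
exists ((Num.sqrt (dotc f f))^-1 *: f); split; first exact: unitvec_normalize.
by rewrite dotcZr beta_f mulr0.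
Qed.

Section CommonOwnership.
Variables (R : realType) (m n : nat) (K : 'I_n -> 'I_n -> R) (alpha kappa : R).
Variables (beta : 'cV[R]_m) (gamma : 'cV[R]_n).
Hypotheses (alpha_gt0 : 0 < alpha) (gamma_gt0 : forall i, 0 < gamma i 0).
Hypotheses (K_offdiag : forall i j, i != j -> K i j = kappa) (kappa1_gt0 : 0 < 1 + kappa).
Hypothesis D_gt0 : 0 < 2 + alpha * (1 - kappa).

Local Notation D := (2 + alpha * (1 - kappa)).
Local Notation equilibrium := (equilibrium K alpha beta gamma).
Local Notation residual := (residual_demand kappa beta).

Lemma equilibrium_best_response A q i : equilibrium A q ->
  residual A q i = dotc (col i A) (residual A q i) *: col i A /\
  2 * (1 + alpha) * q i 0 = alpha * dotc (col i A) (residual A q i) + gamma i 0.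
Proof.
case/(equilibriumP _ _ _ _ _ K_offdiag) => -[unitA q_ge0] br.
exact: own_payoff_argmax (br i).
Qed.

Lemma equilibrium_aggregate A q : equilibrium A q -> (2 <= \rank A)%N ->
  A *m q = (1 + kappa)^-1 *: beta /\ q = D^-1 *: gamma.
Proof.
move=> eqAq rankA; have unitA := eqAq.1.1.
have br i := equilibrium_best_response i eqAq.
pose c i := dotc (col i A) (residual A q i) - (1 + kappa) * q i 0.
set w := beta - (1 + kappa) *: (A *m q).
have wE i : w = c i *: col i A.
  rewrite scalerBl -(br i).1 /residual_demand /w (mulmx_rivals A q i).
  by rewrite scalerDr scalerA opprD addrA addrAC.
have w0 : w = 0.
  have [//|w_neq0] := eqVneq w 0.
  have c_neq0 i : c i != 0.
    by apply: contraNneq w_neq0; rewrite (wE i) => ->; rewrite scale0r.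
  have rank_le1 : (\rank A <= 1)%N.
    apply: (@rank_le1_cols_collinear _ _ _ A w (fun i => (c i)^-1)) => j.
    by rewrite (wE j) scalerA mulVf // scale1r.
  by move: (leq_trans rankA rank_le1).
have kappa1 := lt0r_neq0 kappa1_gt0.
split.
  by move/eqP: w0; rewrite subr_eq0 => /eqP->; rewrite scalerA mulVf // scale1r.
apply/matrixP => i l; rewrite (ord1 l) mxE.
have /eqP : c i = 0.
  have /eqP := wE i; rewrite w0 eq_sym scaler_eq0 (negbTE (unitvec_neq0 (unitA i))) orbF.
  by move/eqP.
rewrite subr_eq0 => /eqP resE; have := (br i).2; rewrite resE => foc.
apply: (mulfI (lt0r_neq0 D_gt0)); rewrite mulrA mulfV ?gt_eqF // mul1r.
by rewrite -[gamma i 0](addKr (alpha * ((1 + kappa) * q i 0))) -foc; ring.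
Qed.

Lemma aggregate_mulmx_gamma A q :
  A *m q = (1 + kappa)^-1 *: beta -> q = D^-1 *: gamma ->
  A *m gamma = (D / (1 + kappa)) *: beta.
Proof.
move=> Aq qE; have -> : gamma = D *: q by rewrite qE scalerA mulfV ?gt_eqF // scale1r.
by rewrite -scalemxAr Aq scalerA.
Qed.

Lemma aggregate_equilibrium A q : (forall i, unitvec (col i A)) ->
  A *m q = (1 + kappa)^-1 *: beta -> q = D^-1 *: gamma -> equilibrium A q.
Proof.
move=> unitA Aq qE; have qiE i : q i 0 = D^-1 * gamma i 0 by rewrite qE mxE.
have q_ge0 i : 0 <= q i 0 by rewrite qiE mulr_ge0 ?invr_ge0 ?ltW.
apply/(equilibriumP _ _ _ _ _ K_offdiag); split=> // i a x ua x0.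
have kappa1 := lt0r_neq0 kappa1_gt0.
have resE : residual A q i = ((1 + kappa) * q i 0) *: col i A.
  rewrite /residual_demand -[rivals A q i](addKr (q i 0 *: col i A)) -mulmx_rivals Aq.
  by rewrite scalerDr scalerN !scalerA mulfV // scale1r opprD opprK addrCA subrr addr0.
have gammaE : gamma i 0 = D * q i 0 by rewrite qiE mulrA mulfV ?gt_eqF // mul1r.
rewrite /own_payoff resE !dotcZr (unitvecE _).1 // mulr1 gammaE.
have /andP[_ d_le1] := dotc_unit_bound ua (unitA i).
have gap : 0 <= alpha * (1 + kappa) * q i 0 * x * (1 - dotc a (col i A)).
  by rewrite !mulr_ge0 ?q_ge0 ?subr_ge0 ?(ltW alpha_gt0) ?(ltW kappa1_gt0).
(* The payoff gap is [alpha (1 + kappa) q_i x (1 - d) + (1 + alpha) (x - q_i)^2]. *)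
have := sqr_ge0 (x - q i 0); have := mulr_ge0 (ltW alpha_gt0) (sqr_ge0 (x - q i 0)).
move: gap; set d := dotc a (col i A); set qi := q i 0; nra.
Qed.

Lemma aggregate_bounds A q : unitvec beta -> (forall i, unitvec (col i A)) ->
  A *m q = (1 + kappa)^-1 *: beta -> q = D^-1 *: gamma ->
  rsmall gamma <= D / (1 + kappa) <= Rl1 gamma.
Proof.
move=> unit_beta unitA Aq qE; have Ag := aggregate_mulmx_gamma Aq qE.
have -> : D / (1 + kappa) = `|D / (1 + kappa)| by rewrite ger0_norm // divr_ge0 ?ltW.
by rewrite (rsmall_le_norm unitA unit_beta Ag) (norm_le_Rl1 unitA unit_beta Ag).
Qed.

Lemma exists_aggregate_equilibrium : (2 <= m)%N -> unitvec beta ->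
  rsmall gamma <= D / (1 + kappa) <= Rl1 gamma ->
  exists A q, [/\ equilibrium A q, A *m q = (1 + kappa)^-1 *: beta &
                  q = D^-1 *: gamma].
Proof.
move=> m2 unit_beta; set L := D / (1 + kappa); case/andP => r_le le_R.
have L0 : 0 < L by rewrite divr_gt0.
have [e [unit_e beta_e]] := exists_unit_orthogonal beta m2.
pose g j := if insub j is Some i then gamma i 0 else 0.
have gE (i : 'I_n) : g i = gamma i 0 by rewrite /g valK.
have sum_g : \sum_(i < n) g i = Rl1 gamma.
  by apply: eq_bigr => i _; rewrite gE ger0_norm // ltW.
have g_gt0 i : (i < n)%N -> 0 < g i by move=> ilt; rewrite (gE (Ordinal ilt)).
have polygon i : (i < n)%N -> 2 * g i <= \sum_(i < n) g i + L.
  move=> ilt; rewrite sum_g (gE (Ordinal ilt)).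
  have := le_bigmax 0 (fun j : 'I_n => `|gamma j 0|) (Ordinal ilt).
  rewrite ger0_norm ?(ltW (gamma_gt0 _)) // -/(linf gamma).
  by move: r_le; rewrite /rsmall; lra.
have normL : L ^+ 2 = L ^+ 2 + 0 ^+ 2 by rewrite expr0n addr0.
have L_le : L <= \sum_(i < n) g i by rewrite sum_g.
have [c [s [cs hc hs]]] := exists_planar_unit_sum g_gt0 (ltW L0) normL L_le polygon.
pose A : 'M[R]_(m, n) := \matrix_(k, j) (c j * beta k 0 + s j * e k 0).
have colA j : col j A = c j *: beta + s j *: e.
  by apply/matrixP => k l; rewrite (ord1 l) !mxE.
have unitA j : unitvec (col j A).
  apply/unitvecE; rewrite colA !(dotcDr, dotcDl, dotcZl, dotcZr) (dotcC e beta) beta_e.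
  by rewrite !(unitvecE _).1 // -[RHS](cs j (ltn_ord j)); ring.
have Aq : A *m (D^-1 *: gamma) = (1 + kappa)^-1 *: beta.
  rewrite mulmx_sum_col.
  under eq_bigr => j _ do rewrite colA mxE -gE scalerDr !scalerA -!mulrA.
  rewrite big_split /= -!scaler_suml -!mulr_sumr hc hs mulr0 scale0r addr0 /L.
  by rewrite mulrA mulVf ?lt0r_neq0 // mul1r.
by exists A, (D^-1 *: gamma); split => //; exact: aggregate_equilibrium.
Qed.

End CommonOwnership.

Theorem proposition6 (R : realType) (n m : nat) (alpha kappa : R)
  (beta : 'cV[R]_m) (gamma : 'cV[R]_n) (K : 'I_n -> 'I_n -> R) :
  (2 <= n)%N -> (2 <= m)%N -> 0 < alpha -> unitvec beta ->
  (forall i : 'I_n, 0 < gamma i 0) ->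
  (forall i : 'I_n, K i i = 1) ->
  (forall i j : 'I_n, i != j -> K i j = kappa) ->
  0 <= kappa -> 0 < 2 + alpha * (1 - kappa) ->
  (forall (A : 'M[R]_(m, n)) (q : 'cV[R]_n),
     equilibrium K alpha beta gamma A q -> (2 <= \rank A)%N ->
     [/\ A *m q = (1 + kappa)^-1 *: beta,
         q = (2 + alpha * (1 - kappa))^-1 *: gamma &
         sbar gamma A =
           (((2 + alpha * (1 - kappa)) / (1 + kappa)) ^+ 2 - sqnorm2 gamma)
           / (n%:R * (n%:R - 1))])
  /\
  ((exists (A : 'M[R]_(m, n)) (q : 'cV[R]_n),
      [/\ equilibrium K alpha beta gamma A q,
          A *m q = (1 + kappa)^-1 *: beta &
          q = (2 + alpha * (1 - kappa))^-1 *: gamma])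
   <->
   rsmall gamma <= (2 + alpha * (1 - kappa)) / (1 + kappa) <= Rl1 gamma).
Proof.
move=> _ m2 alpha_gt0 unit_beta gamma_gt0 _ K_offdiag kappa_ge0 D_gt0.
have kappa1_gt0 : 0 < 1 + kappa by rewrite ltr_wpDr.
split=> [A q eqAq rankA | ].
  have [Aq qE] :=
    equilibrium_aggregate alpha_gt0 gamma_gt0 K_offdiag kappa1_gt0 D_gt0 eqAq rankA.
  split=> //; rewrite sbarE; last exact: eqAq.1.1.
  rewrite (aggregate_mulmx_gamma D_gt0 Aq qE) dotcZl dotcZr (unitvecE _).1 //.
  by rewrite mulr1 expr2.
split=> [[A [q [eqAq Aq qE]]] | bounds].
  exact: (aggregate_bounds kappa1_gt0 D_gt0 unit_beta eqAq.1.1 Aq qE).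
exact: (exists_aggregate_equilibrium alpha_gt0 gamma_gt0 K_offdiag kappa1_gt0 D_gt0
          m2 unit_beta bounds).
Qed.
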